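(* Let $(\Omega,\mathcal G,\mathbb P)$ be a probability space, $\mathcal F=(\mathcal F_t)_{t\in[0,\infty)}$ a filtration with $\mathcal F_\infty\subset\mathcal G$, and $X$ an $\mathbb R^d$-valued Lévy process relative to $\mathcal F$. Let $R:\Omega\to[0,\infty]$ be $\mathcal G$-measurable with $\mathbb P(R<\infty)>0$ and $\mathbb P'(\cdot):=\mathbb P(\cdot\mid R<\infty)$ on $\mathcal G|_{\{R<\infty\}}$. (I) Suppose $\mathcal F_R'$ is independent of $\Delta_RX$ under $\mathbb P'$, and let $P:\Omega\to[0,\infty]$ be $\mathcal G$-measurable with $\mathbb P(P<\infty)>0$ and $\llbracket P\rrbracket=A\cap\llbracket R\rrbracket$ for some $A\in\mathcal O\cup\sigma_{\Omega\times[0,\infty)}(\blacktriangle X)$. Set $\mathcal L'$ to be the law of $\Delta_RX$ under $\mathbb P'$ and $\mathbb P^{:}(F):=\mathbb P(F\mid P<\infty)$ for $F\in\mathcal G|_{\{P<\infty\}}$. (a) If $A\in\mathcal O$, then $\Delta_PX$ is independent of $\mathcal F_P'$ under $\mathbb P^{:}$ and the law of $\Delta_PX$ under $\mathbb P^{:}$ is $\mathcal L'$. (b) If $A=(\blacktriangle X)^{-1}(\Gamma)$ for some $\Gamma\in\mathcal D$, then $\Delta_PX$ is independent of $\mathcal F_P'$ under $\mathbb P^{:}$ and the law of $\Delta_PX$ under $\mathbb P^{:}$ is $\mathcal L'(\cdot\mid\Gamma)$. (II) Conversely, let $R_1,R_2:\Omega\to[0,\infty]$ be $\mathcal G$-measurable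 with $\mathbb P(R_i<\infty)>0$, set $\mathbb P^i(F):=\mathbb P(F\mid R_i<\infty)$ for $F\in\mathcal G|_{\{R_i<\infty\}}$, and suppose $\Delta_{R_i}X$ is independent of $\mathcal F_{R_i}'$ under $\mathbb P^i$ for $i\in\{1,2\}$. (i) If there is $A\in\mathcal O$ with, up to evanescence, $\llbracket R_1\rrbracket=\llbracket R\rrbracket\cap A$ and $\llbracket R_2\rrbracket=\llbracket R\rrbracket\cap A^c$, and if the law $\mathcal M$ of $\Delta_{R_1}X$ under $\mathbb P^1$ equals the law of $\Delta_{R_2}X$ under $\mathbb P^2$, then $\mathcal F_R'$ is independent of $\Delta_RX$ under $\mathbb P'$ and the law of $\Delta_RX$ under $\mathbb P'$ is $\mathcal M$. (ii) If there is $\Gamma\in\mathcal D$ with $\llbracket R_1\rrbracket=\llbracket R\rrbracket\cap\{\blacktriangle X\in\Gamma\}$ and $\llbracket R_2\rrbracket=\llbracket R\rrbracket\cap\{\blacktriangle X\notin\Gamma\}$, if $\mathcal F_R'$ is independent of $\mathbb 1_\Gamma(\Delta_RX)$ under $\mathbb P'$, and if there is a probability law $\mathcal M$ on $(\mathbb D,\mathcal D)$ with $\mathbb P'(\Delta_RX\in\Gamma)=\mathcal M(\Gamma)$, the law of $\Delta_{R_1}X$ under $\mathbb P^1$ equal to $\mathcal M(\cdot\mid\Gamma)$ and the law of $\Delta_{R_2}X$ under $\mathbb P^2$ equal to $\mathcal M(\cdot\mid\mathbb D\setminus\Gamma)$, then $\mathcal F_R'$ is independent of $\Delta_RX$ under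 $\mathbb P'$ and the law of $\Delta_RX$ under $\mathbb P'$ is $\mathcal M$.
   Context: $X$ being a Lévy process relative to $\mathcal F$ means: $X$ is $\mathcal F$-adapted, has càdlàg paths, $X_0=0$ a.s., and for $0\le s\le t$, $X_t-X_s$ is independent of $\mathcal F_s$ and has the law of $X_{t-s}$. $(\mathbb D,\mathcal D)$ is the space of càdlàg paths $[0,\infty)\to\mathbb R^d$ with the $\sigma$-field generated by the coordinate projections. For a random time $S$, on $\{S<\infty\}$, $\Delta_SX:=(X_{S+t}-X_S)_{t\ge0}$; $\blacktriangle X:\Omega\times[0,\infty)\to\mathbb D$ is $(\omega,t)\mapsto\Delta_tX(\omega)$, and $\sigma_{\Omega\times[0,\infty)}(\blacktriangle X)$ is the $\sigma$-field it generates. $\mathcal O$ is the optional $\sigma$-field on $\Omega\times[0,\infty)$, generated by the $\mathcal F$-adapted càdlàg real processes. For a random time $S$, $\mathcal F_S'$ is the $\sigma$-field on $\{S<\infty\}$ generated by $Z_S$ as $Z$ ranges over $\mathcal O$-measurable real processes. $\llbracket S\rrbracket=\{(\omega,t):S(\omega)=t\}$ is the graph of $S$ (in $\Omega\times[0,\infty)$). ''Up to evanescence'' means up to a set whose projection on $\Omega$ is contained in a $\mathbb P$-null set. *)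

From HB Require Import structures.
From mathcomp Require Import all_boot all_order all_algebra.
From mathcomp Require Import all_classical all_reals all_analysis.
From mathcomp Require Import measurable_realfun.
Set Implicit Arguments. Unset Strict Implicit. Unset Printing Implicit Defensive.
Import Order.TTheory GRing.Theory Num.Theory.
Import numFieldNormedType.Exports.
Local Open Scope classical_set_scope.
Local Open Scope ring_scope.

Section Defs.
Variables (R : realType) (d : nat).

Definition cadlag {V : topologicalType} (f : R -> V) : Prop :=
  forall t : R, 0 <= t ->
    (f @ at_right t --> f t) /\ (0 < t -> exists l : V, f @ at_left t --> l).

Definition is_path (f : R -> 'rV[R]_d) : Prop :=
  cadlag f /\ (forall t, t < 0 -> f t = 0).

Definition Dpath := {f : R -> 'rV[R]_d | `[< is_path f >]}.
HB.instance Definition _ := [Choice of Dpath by <:].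

Lemma path0_subproof : `[< is_path (fun _ => 0) >].
Proof.
apply/asboolP; split => // t _; split; first exact: cvg_cst.
by move=> _; exists 0; exact: cvg_cst.
Qed.

Definition path0 : Dpath := exist _ (fun _ => 0) path0_subproof.
HB.instance Definition _ := isPointed.Build Dpath path0.

Definition borelV : set (set 'rV[R]_d) :=
  smallest (sigma_algebra setT) (@open 'rV[R]_d).

Definition coordG : set (set Dpath) :=
  [set A | exists t B, [/\ 0 <= t, borelV B & A = [set w | B (sval w t)]]].

Definition Dsp := g_sigma_algebraType coordG.

Definition shiftpath (x : R -> 'rV[R]_d) (s : R) : Dsp :=
  insubd path0 (fun t => if 0 <= t then x (s + t) - x s else 0).


End Defs.

Section ProbDefs.
Context (R : realType) (d : nat) (dO : measure_display) (Omega : measurableType dO).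

Definition filtration (F : R -> set (set Omega)) : Prop :=
  [/\ (forall t, (0 <= t)%R -> sigma_algebra setT (F t)),
      (forall s t, (0 <= s)%R -> (s <= t)%R -> F s `<=` F t) &
      (forall t, (0 <= t)%R -> F t `<=` measurable)].

Definition levy (P : probability Omega R) (F : R -> set (set Omega))
    (X : R -> Omega -> 'rV[R]_d) : Prop :=
  [/\ (forall t, (0 <= t)%R -> forall B, borelV B -> F t (X t @^-1` B)),
      (forall w, cadlag (fun t => X t w)),
      {ae P, forall w, X 0%R w = 0%R},
      (forall s t, (0 <= s)%R -> (s <= t)%R -> forall A B, F s A -> borelV B ->
         P (A `&` (fun w => X t w - X s w) @^-1` B) =
         (P A * P ((fun w => X t w - X s w)%R @^-1` B))%E) &
      (forall s t, (0 <= s)%R -> (s <= t)%R -> forall B, borelV B ->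
         P ((fun w => X t w - X s w)%R @^-1` B) = P (X (t - s)%R @^-1` B))].

Definition halfline : set (Omega * R) := [set p | (0 <= p.2)%R].

Definition adapted_cadlag (F : R -> set (set Omega)) (Z : R -> Omega -> R) : Prop :=
  (forall t, (0 <= t)%R -> forall B : set R, measurable B -> F t (Z t @^-1` B)) /\
  (forall w, cadlag (fun t => Z t w)).

Definition optional (F : R -> set (set Omega)) : set (set (Omega * R)) :=
  smallest (sigma_algebra halfline)
    [set A | exists Z B, [/\ adapted_cadlag F Z, measurable B &
                  A = [set p | (0 <= p.2)%R /\ B (Z p.2 p.1)]]].

Definition optional_meas (F : R -> set (set Omega)) (Z : Omega * R -> R) : Prop :=
  forall B : set R, measurable B -> optional F [set p | (0 <= p.2)%R /\ B (Z p)].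

Definition fin (S : Omega -> \bar R) : set Omega := [set w | (S w < +oo)%E].

Definition stopped_field (F : R -> set (set Omega)) (S : Omega -> \bar R) :
    set (set Omega) :=
  smallest (sigma_algebra (fin S))
    [set A | exists Z B, [/\ optional_meas F Z, measurable B &
                  A = [set w | (S w < +oo)%E /\ B (Z (w, fine (S w)))]]].

Definition graph (S : Omega -> \bar R) : set (Omega * R) :=
  [set p | S p.1 = (p.2)%:E].

Definition Delta (X : R -> Omega -> 'rV[R]_d) (S : Omega -> \bar R) :
    Omega -> Dsp R d :=
  fun w => shiftpath (fun t => X t w) (fine (S w)).

Definition btpre (X : R -> Omega -> 'rV[R]_d) (G : set (Dsp R d)) :
    set (Omega * R) :=
  [set p | (0 <= p.2)%R /\ G (shiftpath (fun t => X t p.1) p.2)].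

Definition condP (P : probability Omega R) (C A : set Omega) : R :=
  (fine (P (A `&` C)) / fine (P C))%R.

Definition indep_cond (P : probability Omega R) (C : set Omega)
    (H K : set (set Omega)) : Prop :=
  forall A B, H A -> K B ->
    condP P C (A `&` B) = (condP P C A * condP P C B)%R.

Definition sigmaD (C : set Omega) (Y : Omega -> Dsp R d) : set (set Omega) :=
  [set A | exists G, measurable G /\ A = C `&` Y @^-1` G].

Definition sigmaR (C : set Omega) (Y : Omega -> R) : set (set Omega) :=
  [set A | exists B : set R, measurable B /\ A = C `&` Y @^-1` B].

Definition evanescent (P : probability Omega R) (E : set (Omega * R)) : Prop :=
  exists N, [/\ measurable N, P N = 0%E & [set w | exists t, E (w, t)] `<=` N].

Definition eq_evan (P : probability Omega R) (A B : set (Omega * R)) : Prop :=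
  evanescent P ((A `\` B) `|` (B `\` A)).

End ProbDefs.
Arguments halfline {R dO Omega}.

From HB Require Import structures.
From mathcomp Require Import all_boot all_order all_algebra.
From mathcomp Require Import all_classical all_reals all_analysis.
From mathcomp Require Import measurable_realfun.
From mathcomp Require Import lra ring.
Import Order.TTheory GRing.Theory Num.Theory.
Import numFieldNormedType.Exports.
Local Open Scope classical_set_scope.
Local Open Scope ring_scope.
Set Implicit Arguments. Unset Strict Implicit. Unset Printing Implicit Defensive.

(* On {R < oo}, a time whose graph is contained in that of R coincides with R, and
   its stopped sigma-field is the trace of F'_R.
   (I) If [[P]] = A ∩ [[R]] with A optional, then {P < oo} itself belongs to F'_R,
   so conditioning P' further on it keeps Δ_R X independent of F'_R with the same
   law. If A = {▲X ∈ Γ}, then {P < oo} = {R < oo, Δ_R X ∈ Γ}, and the same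
   conditioning turns the law into L'( . | Γ).
   (II) Up to a null set, {R < oo} is the disjoint union of {R_1 < oo} and
   {R_2 < oo}, with R = R_i on each piece and the traces of F'_R inside F'_{R_i}.
   Hence, for E in F'_R, P(E, R < oo, Δ_R X ∈ G) splits into two terms, each of
   which factorizes by the hypothesis on R_i; in (ii) the independence of F'_R from
   {Δ_R X ∈ Γ} moreover gives P(E, R_1 < oo) = P(E, R < oo) M(Γ).
   This additivity needs Δ_R X and the events of F'_R to be measurable, which
   follows from right-continuity by approximating R from above along the grids
   N/(n+1). *)

Lemma g_sigma_top (T : Type) (D : set T) (G : set (set T)) : <<s D, G >> D.
Proof. by have := sigma_algebraCD (@sigma_algebra0 _ D G); rewrite setD0. Qed.

Section GeneratedSigmaAlgebra.
Context (T : Type) (D : set T) (G : set (set T)).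
Hypothesis GD : forall B, G B -> B `<=` D.

Lemma g_sigma_sub A : <<s D, G >> A -> A `<=` D.
Proof.
apply: (smallest_sub (X := [set B | B `<=` D])) => //.
split => /=; first exact: sub0set.
  by move=> B _ x [].
by move=> F hF x [n _ /hF].
Qed.

Lemma g_sigma_setI A B : <<s D, G >> A -> <<s D, G >> B -> <<s D, G >> (A `&` B).
Proof. by have [_ _ _] := (sigma_algebraP g_sigma_sub).1 (smallest_sigma_algebra D G); apply. Qed.

End GeneratedSigmaAlgebra.

Lemma exists_natSinv_lt (R : archiRealFieldType) (e : R) : 0 < e ->
  exists m : nat, m.+1%:R^-1 < e.
Proof.
move=> e0; have [N _ hN] := near_infty_natSinv_lt (PosNum e0).
by exists N; exact: (hN N (leqnn N)).
Qed.

Section BorelRowVectors.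
Context (R : realType) (d : nat).
Local Notation V := 'rV[R]_d.

Lemma borelV_open (U : set V) : open U -> borelV U.
Proof. by move=> oU; exact: sub_sigma_algebra. Qed.

Lemma rV_rat_approx (x : V) (r : R) : 0 < r ->
  exists q : 'rV[rat]_d, `|x - map_mx ratr q| < r.
Proof.
move=> r0.
have /choice [q hq] : forall j : 'I_d, exists q : rat,
    ratr q \in `](x 0 j - r), (x 0 j + r)[.
  by move=> j; apply: rat_in_itvoo; lra.
exists (\row_j q j); rewrite [`|_|]mx_normrE; apply: bigmax_lt => //= -[i j] _ /=.
rewrite !mxE (ord1 i); move: (hq j); rewrite in_itv /= => /andP[h1 h2].
by rewrite ltr_norml; apply/andP; split; lra.
Qed.

Context (dO : measure_display) (Omega : measurableType dO).

Definition rV_measurable (f : Omega -> V) := forall B, borelV B -> measurable (f @^-1` B).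

Lemma rV_measurable_open f :
  (forall U, open U -> measurable (f @^-1` U)) -> rV_measurable f.
Proof.
move=> hU B hB; apply: (smallest_sub (X := [set B | measurable (f @^-1` B)]) _ _ hB) => //.
split => /=.
- by rewrite preimage_set0.
- by move=> A hA; rewrite setTD preimage_setC; exact: measurableC.
- by move=> F hF; rewrite preimage_bigcup; exact: bigcupT_measurable.
Qed.

Lemma rV_measurable_cvg (f_ : nat -> Omega -> V) (f : Omega -> V) :
  (forall n, rV_measurable (f_ n)) -> (forall w, (fun n => f_ n w) @ \oo --> f w) ->
  rV_measurable f.
Proof.
move=> mf cf; apply: rV_measurable_open => U oU.
pose r (m : nat) : R := m.+1%:R^-1.
have r0 m : 0 < r m by rewrite /r invr_gt0.
(* [f w] is in [U] iff the [f_ n w] eventually stay [r m]-close to a point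
   whose [2 r m]-ball lies in [U] *)
pose W m : set V := \bigcup_(y in [set y | ball y (2 * r m) `<=` U]) ball y (r m).
have -> : f @^-1` U = \bigcup_m \bigcup_N \bigcap_k (f_ (N + k)%N @^-1` W m).
  apply/seteqP; split => w /=.
    move=> Uw; have /nbhs_ballP [e /= e0 he] : nbhs (f w) U.
      by apply: open_nbhs_nbhs; split.
    have [m hm] := exists_natSinv_lt (divr_gt0 e0 (ltr0n _ 2)).
    have [N _ hN] := (cvgrPdist_lt _ _).1 (cf w) (r m) (r0 m).
    exists m => //; exists N => // k _; exists (f w).
      by apply: subset_trans he; apply: le_ball; have : r m < e / 2 := hm; lra.
    by rewrite -ball_normE /=; apply: hN; exact: leq_addr.
  move=> [m _ [N _ hN]].
  have [N' _ hN'] := (cvgrPdist_lt _ _).1 (cf w) (r m) (r0 m).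
  have [y yU] := hN N' I; rewrite -ball_normE /= => h1; apply: yU.
  move: (hN' (N + N')%N (leq_addl _ _)); rewrite -ball_normE /= distrC => h2.
  by rewrite (le_lt_trans (ler_distD (f_ (N + N')%N w) _ _)) //; lra.
apply: bigcupT_measurable => m; apply: bigcupT_measurable => N.
apply: bigcapT_measurable => k; apply: mf; apply: borelV_open.
by rewrite /W; apply: bigcup_open => y _; apply: ball_open.
Qed.

Lemma rV_measurableB (g h : Omega -> V) :
  rV_measurable g -> rV_measurable h -> rV_measurable (fun w => g w - h w).
Proof.
move=> mg mh; apply: rV_measurable_open => U oU.
pose r (m : nat) : R := m.+1%:R^-1.
have r0 m : 0 < r m by rewrite /r invr_gt0.
pose Q (q : 'rV[rat]_d) : V := map_mx ratr q.
(* [g w - h w] is in [U] iff, for some rational [q] close to [g w], [q - h w] is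
   deep inside [U] *)
pose S m q : set V := \bigcup_(z in [set z | ball (Q q - z) (3 * r m) `<=` U]) ball z (r m).
pose T m q := g @^-1` ball (Q q) (r m) `&` h @^-1` S m q.
have -> : (fun w => g w - h w) @^-1` U =
    \bigcup_m \bigcup_n (if @unpickle 'rV[rat]_d n is Some q then T m q else set0).
  apply/seteqP; split => w /=.
    move=> Uw; have /nbhs_ballP [e /= e0 he] : nbhs (g w - h w) U.
      by apply: open_nbhs_nbhs; split.
    have [m hm] := exists_natSinv_lt (divr_gt0 e0 (ltr0n _ 5)).
    have [q hq] := rV_rat_approx (g w) (r0 m).
    exists m => //; exists (pickle q) => //; rewrite pickleK; split => /=.
      by rewrite -ball_normE /= distrC.
    exists (h w); last by rewrite -ball_normE /= subrr normr0.
    move=> y; rewrite -ball_normE /= => hy; apply: he; rewrite -ball_normE /=.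
    have := ler_distD (Q q - h w) (g w - h w) y.
    rewrite opprB addrA subrK; have : r m < e / 5 := hm; lra.
  move=> [m _ [n _]]; case: (unpickle n) => [q|//] [/= h1 [z zU hz]].
  apply: zU; move: h1 hz; rewrite -!ball_normE /= => h1 hz.
  rewrite opprB [h w - g w]addrC addrACA [- z + _]addrC.
  by apply: (le_lt_trans (ler_normD _ _)); rewrite distrC in hz; have := r0 m; lra.
apply: bigcupT_measurable => m; apply: bigcupT_measurable => n.
case: (unpickle n) => [q|//]; apply: measurableI.
  by apply: mg; apply: borelV_open; exact: ball_open.
by apply: mh; apply: borelV_open; rewrite /S; apply: bigcup_open => z _; apply: ball_open.
Qed.

End BorelRowVectors.

Section RightContinuousAtRandomTime.
Context (R : realType).

Definition grid_above (n : nat) (x : R) : R := (Num.trunc (x * n.+1%:R)).+1%:R / n.+1%:R.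

Lemma grid_above_gt n x : x < grid_above n x.
Proof. by rewrite /grid_above ltr_pdivlMr ?ltr0Sn //; exact: truncnS_gt. Qed.

Lemma grid_above_cvg (x : R) : 0 <= x -> grid_above n x @[n --> \oo] --> x.
Proof.
move=> x0; apply/cvgrPdist_lt => e e0.
apply: filterS (near_infty_natSinv_lt (PosNum e0)) => n /= hn.
have le_x : grid_above n x <= x + n.+1%:R^-1.
  rewrite /grid_above ler_pdivrMr ?ltr0Sn // mulrDl mulVf ?pnatr_eq0 //.
  have /andP[+ _] := truncn_itv (mulr_ge0 x0 (ler0n _ n.+1)).
  by rewrite -natr1; lra.
have := grid_above_gt n x; rewrite ltr_norml; move: hn le_x.
by set t := n.+1%:R^-1 => hn le_x gt_x; apply/andP; split; lra.
Qed.

Lemma grid_aboveE n (x : R) k : k%:R / n.+1%:R <= x < k.+1%:R / n.+1%:R ->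
  grid_above n x = k.+1%:R / n.+1%:R.
Proof.
move=> /andP[h1 h2]; rewrite /grid_above (@truncn_def _ _ k) //.
by rewrite -ler_pdivrMr ?ltr0Sn // -ltr_pdivlMr ?ltr0Sn // h1 h2.
Qed.

Lemma grid_cell n (x : R) : 0 <= x -> exists k, k%:R / n.+1%:R <= x < k.+1%:R / n.+1%:R.
Proof.
move=> x0; exists (Num.trunc (x * n.+1%:R)).
have /andP[h1 h2] := truncn_itv (mulr_ge0 x0 (ler0n _ n.+1)).
by rewrite ler_pdivrMr ?ltr0Sn // ltr_pdivlMr ?ltr0Sn // h1 h2.
Qed.

Lemma cvg_at_right_seq (T : topologicalType) (f : R -> T) (x : R) (u : nat -> R) :
  f @ x^'+ --> f x -> (forall n, x < u n) -> u n @[n --> \oo] --> x ->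
  f (u n) @[n --> \oo] --> f x.
Proof.
move=> fx xu ux; apply: cvg_comp fx => A /ux [N _ hN].
by exists N => // n /hN /(_ (xu n)).
Qed.

Lemma addr_at_right (s t : R) : (fun u => s + u) @ t^'+ --> (s + t)^'+.
Proof.
by move=> A /nbhs_right0P hA; apply/nbhs_right0P; apply: filterS hA => e /=; rewrite addrA.
Qed.

Lemma addr_at_left (s t : R) : (fun u => s + u) @ t^'- --> (s + t)^'-.
Proof.
by move=> A /nbhs_left0P hA; apply/nbhs_left0P; apply: filterS hA => e /=; rewrite addrA.
Qed.

Context (dO : measure_display) (Omega : measurableType dO).
Context (tau : Omega -> R).
Hypotheses (mtau : measurable_fun setT tau) (tau_ge0 : forall w, 0 <= tau w).

Lemma measurable_at_grid_time (T : Type) (Y : R -> Omega -> T) n (B : set T) :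
  (forall u, 0 <= u -> measurable (Y u @^-1` B)) ->
  measurable ((fun w => Y (grid_above n (tau w)) w) @^-1` B).
Proof.
move=> mY.
pose cell (k : nat) : set R := `[k%:R / n.+1%:R, k.+1%:R / n.+1%:R[%classic.
have -> : (fun w => Y (grid_above n (tau w)) w) @^-1` B =
    \bigcup_k (tau @^-1` cell k `&` Y (k.+1%:R / n.+1%:R) @^-1` B).
  apply/seteqP; split => w /=.
    have [k hk] := grid_cell n (tau_ge0 w).
    by rewrite (grid_aboveE hk) => hB; exists k => //; split; rewrite //= /cell /= in_itv /= hk.
  by move=> [k _ [/= hk hB]]; move: hk; rewrite /cell /= in_itv /= => /grid_aboveE ->.
apply: bigcupT_measurable => k; apply: measurableI; last exact/mY/divr_ge0.
by rewrite -(setTI (_ @^-1` _)); apply: mtau => //; exact: measurable_itv.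
Qed.

Lemma rV_measurable_at_time d (Y : R -> Omega -> 'rV[R]_d) :
  (forall u, 0 <= u -> rV_measurable (Y u)) ->
  (forall w u, 0 <= u -> (fun t => Y t w) @ u^'+ --> Y u w) ->
  rV_measurable (fun w => Y (tau w) w).
Proof.
move=> mY rcY; apply: (@rV_measurable_cvg _ _ _ _ (fun n w => Y (grid_above n (tau w)) w)).
  by move=> n B hB; apply: measurable_at_grid_time => u u0; exact: mY.
move=> w; apply: (cvg_at_right_seq (f := fun t => Y t w)).
- exact: rcY.
- by move=> n; exact: grid_above_gt.
- exact: grid_above_cvg.
Qed.

Lemma measurable_at_time (Z : R -> Omega -> R) :
  (forall u, 0 <= u -> measurable_fun setT (Z u)) ->
  (forall w u, 0 <= u -> (fun t => Z t w) @ u^'+ --> Z u w) ->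
  measurable_fun setT (fun w => Z (tau w) w).
Proof.
move=> mZ rcZ; apply: (@measurable_fun_cvg _ _ _ _ (fun n w => Z (grid_above n (tau w)) w)).
  move=> n _ B mB; rewrite setTI; apply: measurable_at_grid_time => u u0.
  by rewrite -(setTI (_ @^-1` _)); exact: mZ.
move=> w _; apply: (cvg_at_right_seq (f := fun t => Z t w)).
- exact: rcZ.
- by move=> n; exact: grid_above_gt.
- exact: grid_above_cvg.
Qed.

End RightContinuousAtRandomTime.

Section ShiftedPath.
Context (R : realType) (d : nat).
Local Notation V := 'rV[R]_d.

Lemma shift_is_path (x : R -> V) (s : R) : 0 <= s -> cadlag x ->
  is_path (fun t => if 0 <= t then x (s + t) - x s else 0).
Proof.
move=> s0 hx; split; last by move=> t t0; rewrite leNgt t0.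
move=> t t0; split.
  have xr : (fun u => x (s + u)) @ t^'+ --> x (s + t).
    have h := cvg_comp _ _ (@addr_at_right _ s t) (hx (s + t) (addr_ge0 s0 t0)).1; exact: h.
  rewrite t0; apply: cvg_trans (cvgB xr (cvg_cst (x s))).
  apply: near_eq_cvg; near=> u.
  have ut : t < u by near: u; exact: nbhs_right_gt.
  by rewrite /= (le_trans t0 (ltW ut)).
move=> tpos; have [l hl] := (hx (s + t) (addr_ge0 s0 (ltW tpos))).2 (ltr_pwDr tpos s0).
have xl : (fun u => x (s + u)) @ t^'- --> l.
  have h := cvg_comp _ _ (@addr_at_left _ s t) hl; exact: h.
exists (l - x s); apply: cvg_trans (cvgB xl (cvg_cst (x s))).
apply: near_eq_cvg; near=> u.
have u0 : 0 < u by near: u; apply: nbhs_left_gt.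
by rewrite /= (ltW u0).
Unshelve. all: by end_near.
Qed.

Lemma sval_shiftpath (x : R -> V) (s : R) : 0 <= s -> cadlag x ->
  sval (shiftpath x s) = (fun t => if 0 <= t then x (s + t) - x s else 0).
Proof. by move=> s0 hx; rewrite /shiftpath insubdK //; apply/asboolP; exact: shift_is_path. Qed.

End ShiftedPath.

Section RandomTimeMeasurability.
Context (R : realType) (d : nat) (dO : measure_display) (Omega : measurableType dO).
Implicit Types (S : Omega -> \bar R).

Lemma fin_measurable S : measurable_fun setT S -> measurable (fin S).
Proof.
move=> mS; have -> : fin S = setT `&` S @^-1` (~` [set +oo%E]).
  apply/seteqP; split => w; rewrite /fin /= ltey; first by move=> /eqP.
  by move=> [_ /eqP].
exact/mS/measurableC/emeasurable_set1.
Qed.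

Lemma measurable_fine_time S : measurable_fun setT S ->
  measurable_fun setT (fun w => fine (S w)).
Proof. by move=> mS; exact: measurableT_comp (fine_measurable measurableT) mS. Qed.

Lemma measurable_Delta (X : R -> Omega -> 'rV[R]_d) S :
  (forall t, 0 <= t -> rV_measurable (X t)) -> (forall w, cadlag (fun t => X t w)) ->
  measurable_fun setT S -> (forall w, (0 <= S w)%E) ->
  forall G : set (Dsp R d), measurable G -> measurable (Delta X S @^-1` G).
Proof.
move=> mX cX mS S0 G mG.
have mt := measurable_fine_time mS.
have t0 w : 0 <= fine (S w) by exact: fine_ge0.
apply: (smallest_sub (X := [set G | measurable (Delta X S @^-1` G)]) _ _ mG) => //.
  split => //=.
  - by rewrite preimage_set0.
  - by move=> A hA; rewrite setTD preimage_setC; exact: measurableC.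
  - by move=> F hF; rewrite preimage_bigcup; exact: bigcupT_measurable.
move=> _ [t [B [t0' hB ->]]] /=.
have -> : Delta X S @^-1` [set w | B (sval w t)] =
    (fun w => X (fine (S w) + t) w - X (fine (S w)) w) @^-1` B.
  by apply/seteqP; split => w /=; rewrite /Delta sval_shiftpath // t0'.
apply: rV_measurableB => //; last first.
  by apply: (rV_measurable_at_time mt t0) => // w u u0; exact: (cX w u u0).1.
apply: (rV_measurable_at_time mt t0 (Y := fun u => X (u + t))).
  by move=> u u0; apply: mX; exact: addr_ge0.
move=> w u u0; under eq_fun do rewrite addrC.
have h := cvg_comp _ _ (@addr_at_right _ t u) (cX w (t + u) (addr_ge0 t0' u0)).1.
by rewrite addrC; exact: h.
Qed.

Context (F : R -> set (set Omega)).
Hypothesis hF : filtration F.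

Lemma optional_at_time (O : set (Omega * R)) (tau : Omega -> R) :
  optional F O -> measurable_fun setT tau -> (forall w, 0 <= tau w) ->
  measurable [set w | O (w, tau w)].
Proof.
move=> hO mtau tau0; move: O hO; apply: smallest_sub.
  split => /=.
  - by rewrite [X in measurable X](_ : _ = set0) //; apply/seteqP; split.
  - move=> A hA; rewrite [X in measurable X](_ : _ = ~` [set w | A (w, tau w)]).
      exact: measurableC.
    by apply/seteqP; split => w /=; [case|move=> h; split => //; exact: tau0].
  - move=> G hG; rewrite [X in measurable X](_ : _ = \bigcup_k [set w | G k (w, tau w)]).
      exact: bigcupT_measurable.
    by apply/seteqP; split => w /= [k _ h]; exists k.
move=> _ [Z [B [[hZ cZ] mB ->]]] /=.
have mZ : measurable_fun setT (fun w => Z (tau w) w).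
  apply: measurable_at_time => // [u u0 _ C mC|w u u0]; last exact: (cZ w u u0).1.
  by rewrite setTI; case: hF => _ _ hF3; apply: hF3 u u0 _ (hZ u u0 C mC).
rewrite [X in measurable X](_ : _ = setT `&` (fun w => Z (tau w) w) @^-1` B).
  exact: mZ.
by apply/seteqP; split => w /=; [case|move=> [_ h]; split].
Qed.

Lemma stopped_field_measurable S : measurable_fun setT S -> (forall w, (0 <= S w)%E) ->
  stopped_field F S `<=` measurable.
Proof.
move=> mS S0; apply: smallest_sub.
  split => //=.
  - by move=> A mA; apply: measurableD => //; exact: fin_measurable.
  - by move=> G hG; exact: bigcupT_measurable.
move=> _ [Z [B [hZ mB ->]]].
rewrite [X in measurable X]
  (_ : _ = fin S `&` [set w | [set p | 0 <= p.2 /\ B (Z p)] (w, fine (S w))]).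
  apply: measurableI; first exact: fin_measurable.
  by apply: optional_at_time (hZ B mB) (measurable_fine_time mS) _ => w; exact: fine_ge0.
apply/seteqP; split => w /=; first by move=> [? ?]; split => //; split => //; exact: fine_ge0.
by move=> [? [_ ?]].
Qed.

End RandomTimeMeasurability.

Section ConditionalProbability.
Context (R : realType) (d : nat) (dO : measure_display) (Omega : measurableType dO).
Variable P : probability Omega R.
Local Notation Pr A := (fine (P A)).

Lemma Pr_neq0 A : measurable A -> (0 < P A)%E -> Pr A != 0.
Proof.
move=> mA PA; rewrite gt_eqF // fine_gt0 // PA /= ltey.
by have := fin_num_measure P A mA; rewrite fin_numE => /andP[].
Qed.

Lemma Pr_setD_null A N : measurable A -> measurable N -> P N = 0%E -> Pr (A `\` N) = Pr A.
Proof.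
move=> mA mN PN; rewrite [in RHS](measureDI P mA mN).
by rewrite (subset_measure0 (measurableI _ _ mA mN) mN _ PN) ?adde0 // => w [].
Qed.

Section NullSet.
Variable N : set Omega.
Hypotheses (mN : measurable N) (PN : P N = 0%E).

Lemma Pr_eq_ae A B : measurable A -> measurable B ->
  (forall w, ~ N w -> A w <-> B w) -> Pr A = Pr B.
Proof.
move=> mA mB AB; rewrite -(Pr_setD_null mA mN PN) -(Pr_setD_null mB mN PN).
by congr (fine (P _)); apply/seteqP; split => w [h nN]; split => //; move: h; apply AB.
Qed.

Lemma Pr_split_ae A A1 A2 : measurable A -> measurable A1 -> measurable A2 ->
  (forall w, ~ N w -> A w <-> A1 w \/ A2 w) -> (forall w, ~ N w -> A1 w -> ~ A2 w) ->
  Pr A = Pr A1 + Pr A2.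
Proof.
move=> mA mA1 mA2 hA dA.
have mA1N : measurable (A1 `\` N) by exact: measurableD.
have mA2N : measurable (A2 `\` N) by exact: measurableD.
rewrite -(Pr_setD_null mA1 mN PN) -(Pr_setD_null mA2 mN PN) -fineD ?fin_num_measure //.
rewrite -measureU //; last first.
  by apply/seteqP; split => // w [[h1 nN] [h2 _]]; exact: dA nN h1 h2.
apply: Pr_eq_ae => //; first exact: measurableU.
by move=> w nN; rewrite hA //=; split => [[]|[[]|[]]]; by [left|right|].
Qed.

End NullSet.

Lemma condP_setT C : Pr C != 0 -> condP P C setT = 1.
Proof. by move=> C0; rewrite /condP setTI divff. Qed.

Lemma condPIl C A : condP P C (C `&` A) = condP P C A.
Proof. by rewrite /condP [C `&` A]setIC -setIA setIid. Qed.

Lemma indep_condE C H K E B : Pr C != 0 -> indep_cond P C H K -> H E -> K (C `&` B) ->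
  Pr (E `&` C `&` B) = Pr (E `&` C) * condP P C B.
Proof.
move=> C0 hI hE hB; have := hI E (C `&` B) hE hB; rewrite /condP.
rewrite (_ : E `&` (C `&` B) `&` C = E `&` C `&` B); last by apply/seteqP; split => w /=; tauto.
rewrite (_ : C `&` B `&` C = B `&` C); last by apply/seteqP; split => w /=; tauto.
by move/(congr1 (fun x => x * Pr C)); rewrite divfK // => ->; field.
Qed.

Lemma factor_indep_cond C H (Y : Omega -> Dsp R d) (m : set (Dsp R d) -> R) :
  Pr C != 0 -> H C ->
  (forall E G, H E -> measurable G -> Pr (E `&` C `&` Y @^-1` G) = Pr (E `&` C) * m G) ->
  indep_cond P C H (sigmaD C Y) /\
  (forall G, measurable G -> condP P C (Y @^-1` G) = m G).
Proof.
move=> C0 hC hf.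
have law G : measurable G -> condP P C (Y @^-1` G) = m G.
  by move=> mG; rewrite /condP setIC -[C in C `&` _]setIid hf // setIid [_ * m G]mulrC mulfK.
split => // E _ hE [G [mG ->]]; rewrite condPIl law // /condP.
rewrite (_ : E `&` (C `&` Y @^-1` G) `&` C = E `&` C `&` Y @^-1` G).
  by rewrite hf // mulrAC.
by apply/seteqP; split => w /=; tauto.
Qed.

Lemma indep_cond_restrict C C' H H' (Y Y' : Omega -> Dsp R d) Ga :
  Pr C != 0 -> Pr C' != 0 -> measurable Ga -> H' C' ->
  (forall w, C' w -> Y' w = Y w) ->
  (forall E', H' E' -> E' `<=` C' /\ exists2 E, H E & E' = E `&` C `&` Y @^-1` Ga) ->
  indep_cond P C H (sigmaD C Y) ->
  indep_cond P C' H' (sigmaD C' Y') /\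
  (forall G, measurable G -> condP P C' (Y' @^-1` G) =
     condP P C (Y @^-1` (G `&` Ga)) / condP P C (Y @^-1` Ga)).
Proof.
move=> C0 C'0 mGa hC' eY hH' hI.
have factor E G : H E -> measurable G ->
    Pr (E `&` C `&` Y @^-1` G) = Pr (E `&` C) * condP P C (Y @^-1` G).
  by move=> hE mG; apply: indep_condE hI hE _ => //; exists G.
have Ga0 : condP P C (Y @^-1` Ga) != 0.
  have [_ [E hE eC']] := hH' C' hC'.
  by apply: contra_neq C'0; rewrite {1}eC' factor // => ->; rewrite mulr0.
apply: factor_indep_cond => // E' G hE' mG; have [sE' [E hE eE']] := hH' E' hE'.
rewrite (_ : _ `&` Y' @^-1` G = E `&` C `&` Y @^-1` (G `&` Ga)); last first.
  apply/seteqP; split => w /=.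
    move=> [[E'w _] Gw]; have C'w := sE' _ E'w.
    by move: E'w Gw; rewrite eE' eY //= => -[[Ew Cw] Gaw] Gw.
  move=> [[Ew Cw] [Gw Gaw]]; have E'w : E' w by rewrite eE'.
  by have C'w := sE' _ E'w; rewrite eY.
rewrite (_ : E' `&` C' = E `&` C `&` Y @^-1` Ga); last first.
  by rewrite -eE'; apply/seteqP; split => [w []//|w h]; split => //; apply: sE'.
by rewrite !factor //; [field | exact: measurableI].
Qed.

End ConditionalProbability.

Section StoppedField.
Context (R : realType) (dO : measure_display) (Omega : measurableType dO).
Variable F : R -> set (set Omega).
Implicit Types S : Omega -> \bar R.

Lemma stopped_field_sub S E : stopped_field F S E -> E `<=` fin S.
Proof. by apply: g_sigma_sub => _ [Z [B [_ _ ->]]] w []. Qed.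

Lemma stopped_field_setI S E E' : stopped_field F S E -> stopped_field F S E' ->
  stopped_field F S (E `&` E').
Proof. by apply: g_sigma_setI => _ [Z [B [_ _ ->]]] w []. Qed.

Lemma stopped_field_fin S : stopped_field F S (fin S).
Proof. exact: g_sigma_top. Qed.

Lemma stopped_field_gen S Z B : optional_meas F Z -> measurable B ->
  stopped_field F S [set w | (S w < +oo)%E /\ B (Z (w, fine (S w)))].
Proof. by move=> hZ mB; apply: sub_sigma_algebra; exists Z, B. Qed.

Lemma stopped_field_trace S S' E' :
  fin S' `<=` fin S -> (forall w, fin S' w -> S' w = S w) ->
  stopped_field F S' E' -> exists2 E, stopped_field F S E & E' = fin S' `&` E.
Proof.
move=> sub eS; move: E'; apply: smallest_sub.
  split.
  - by exists set0; [exact: sigma_algebra0 | rewrite setI0].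
  - move=> _ [E hE ->]; exists (fin S `\` E); first exact: sigma_algebraCD.
    apply/seteqP; split => w /=; last by move=> [? [_ ?]]; split => // -[].
    by move=> [fw nE]; split => //; split; [exact: sub | move=> Ew; exact: nE].
  - move=> G hG; have /choice [f hf] : forall n, exists E,
        stopped_field F S E /\ G n = fin S' `&` E.
      by move=> n; have [E ? ?] := hG n; exists E.
    exists (\bigcup_n f n); first exact: sigma_algebra_bigcup (fun n => (hf n).1).
    by rewrite setI_bigcupr; apply: eq_bigcupr => n _; exact: (hf n).2.
move=> _ [Z [B [hZ mB ->]]].
exists [set w | (S w < +oo)%E /\ B (Z (w, fine (S w)))]; first exact: stopped_field_gen hZ mB.
apply/seteqP; split => w /=; last by move=> [fw [fSw hB]]; rewrite eS.
by move=> [fw hB]; split => //; split; [exact: sub | rewrite -eS].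
Qed.

Lemma stopped_field_trace_ae S S' (N : set Omega) E :
  (forall w, ~ N w -> fin S' w -> fin S w /\ S' w = S w) ->
  stopped_field F S E ->
  exists2 E', stopped_field F S' E' & forall w, ~ N w -> (E w /\ fin S' w <-> E' w).
Proof.
move=> hN; move: E; apply: smallest_sub.
  split.
  - by exists set0 => [|w _]; [exact: sigma_algebra0 | split => -[]].
  - move=> E [E' hE' eE]; exists (fin S' `\` E'); first exact: sigma_algebraCD.
    by move=> w nN; have := eE w nN; have := hN w nN; rewrite /setD /=; tauto.
  - move=> G hG; have /choice [f hf] : forall n, exists E', stopped_field F S' E' /\
        forall w, ~ N w -> (G n w /\ fin S' w <-> E' w).
      by move=> n; have [E' ? ?] := hG n; exists E'.
    exists (\bigcup_n f n); first exact: sigma_algebra_bigcup (fun n => (hf n).1).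
    move=> w nN; split => [[[n _ Gw] fw]|[n _ fw]]; first by exists n => //; apply/(hf n).2.
    by have [Gw fS'w] := ((hf n).2 w nN).2 fw; split => //; exists n.
move=> _ [Z [B [hZ mB ->]]].
exists [set w | (S' w < +oo)%E /\ B (Z (w, fine (S' w)))]; first exact: stopped_field_gen hZ mB.
move=> w nN /=; split => [[[_ hB] fw]|[fw hB]]; have [fSw eS] := hN w nN fw.
  by rewrite eS.
by rewrite -eS.
Qed.

End StoppedField.

Section Graphs.
Context (R : realType) (dO : measure_display) (Omega : measurableType dO).
Implicit Types S : Omega -> \bar R.

Lemma fin_fineK S w : (0 <= S w)%E -> fin S w -> S w = (fine (S w))%:E.
Proof. by move=> S0 fS; rewrite fineK // ge0_fin_numE. Qed.

Lemma graphI_fin S S' (B : set (Omega * R)) w : (0 <= S w)%E -> (0 <= S' w)%E ->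
  (forall t, graph S' (w, t) <-> graph S (w, t) /\ B (w, t)) ->
  (fin S' w <-> fin S w /\ B (w, fine (S w))) /\ (fin S' w -> S' w = S w).
Proof.
move=> S0 S'0 hg.
have eS : fin S' w -> S' w = S w /\ B (w, fine (S w)).
  move=> fw; have [/= eS hB] := (hg _).1 (fin_fineK S'0 fw).
  by rewrite eS; split => //; exact: fin_fineK.
split; last by move=> /eS [].
split => [fw|[fw hB]]; first by have [eSw ?] := eS fw; split => //; rewrite /fin /= -eSw.
have eS' : S' w = (fine (S w))%:E := (hg _).2 (conj (fin_fineK S0 fw) hB).
by rewrite /fin /= eS' ltry.
Qed.

Lemma graphI_fin_eq S S' (B : set (Omega * R)) :
  (forall w, (0 <= S w)%E) -> (forall w, (0 <= S' w)%E) -> graph S' = graph S `&` B ->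
  fin S' = [set w | fin S w /\ B (w, fine (S w))] /\ (forall w, fin S' w -> S' w = S w).
Proof.
move=> S0 S'0 hg.
have gw w : (fin S' w <-> fin S w /\ B (w, fine (S w))) /\ (fin S' w -> S' w = S w).
  by apply: graphI_fin => // t; rewrite hg.
by split => [|w]; [apply/seteqP; split => w /(gw w).1 | exact: (gw w).2].
Qed.

Variable P : probability Omega R.

Lemma eq_evanP (A B : set (Omega * R)) : eq_evan P A B ->
  exists N, [/\ measurable N, P N = 0%E & forall w t, ~ N w -> (A (w, t) <-> B (w, t))].
Proof.
move=> [N [mN PN sN]]; exists N; split => // w t nN.
by split => h; apply: contrapT => nh; apply: nN; apply: sN; exists t; [left|right].
Qed.

Lemma eq_evan_eq (A B : set (Omega * R)) : A = B -> eq_evan P A B.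
Proof. by move=> <-; exists set0; split => // w [t [[]|[]]]. Qed.

End Graphs.

Lemma indic_eq1 (R : realType) (T : Type) (A : set T) x : (\1_A x = 1 :> R) <-> A x.
Proof.
rewrite indicE; split => [|/mem_set -> //].
by case: (boolP (x \in A)) => [/set_mem //|_ /eqP]; rewrite eq_sym oner_eq0.
Qed.

Lemma optional_meas_indic (R : realType) (dO : measure_display) (Omega : measurableType dO)
    (F : R -> set (set Omega)) (A : set (Omega * R)) :
  optional F A -> optional_meas F (\1_A).
Proof.
move=> hA B mB; have sA : A `<=` halfline.
  by apply: g_sigma_sub hA => _ [Z [C [_ _ ->]]] p [].
rewrite (_ : [set p | _] = halfline `&` \1_A @^-1` B) // preimage_indic.
case: ifP => _; case: ifP => _.
- by rewrite setIT; exact: g_sigma_top.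
- by rewrite setIidr.
- by rewrite -setDE; exact: sigma_algebraCD.
- by rewrite setI0; exact: sigma_algebra0.
Qed.

Section Regeneration.
Context (R : realType) (d : nat) (dO : measure_display) (Omega : measurableType dO).
Variables (P : probability Omega R) (F : R -> set (set Omega)) (X : R -> Omega -> 'rV[R]_d).
Local Notation Pr A := (fine (P A)).
Implicit Types S : Omega -> \bar R.

Definition shift_indep S :=
  indep_cond P (fin S) (stopped_field F S) (sigmaD (fin S) (Delta X S)).

Definition shift_law S (G : set (Dsp R d)) := condP P (fin S) (Delta X S @^-1` G).

Lemma btpre_fine S (Ga : set (Dsp R d)) w : (0 <= S w)%E ->
  btpre X Ga (w, fine (S w)) <-> Ga (Delta X S w).
Proof. by move=> S0; split => [[]|] //; split => //; exact: fine_ge0. Qed.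

Lemma btpreC (Ga : set (Dsp R d)) : btpre X (~` Ga) = halfline `\` btpre X Ga.
Proof. by apply/seteqP; split => p /=; [move=> [? ?]; split => // -[]|move=> [? /not_andP []]]. Qed.

Lemma fin_graphI_btpre S S' (Ga : set (Dsp R d)) :
  (forall w, (0 <= S w)%E) -> (forall w, (0 <= S' w)%E) ->
  graph S' = graph S `&` btpre X Ga ->
  fin S' = fin S `&` Delta X S @^-1` Ga /\ (forall w, fin S' w -> S' w = S w).
Proof.
move=> S0 S'0 /(graphI_fin_eq S0 S'0) [-> eS]; split => //.
by apply/seteqP; split => w [fw /(btpre_fine _ (S0 w))].
Qed.

Variable Rt : Omega -> \bar R.
Hypotheses (R0 : forall w, (0 <= Rt w)%E) (mR : measurable_fun setT Rt)
  (PR : (0 < P (fin Rt))%E).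

Let C0 : Pr (fin Rt) != 0 := Pr_neq0 (fin_measurable mR) PR.

Lemma shift_indep_restrict_optional Pt A :
  (forall w, (0 <= Pt w)%E) -> measurable_fun setT Pt -> (0 < P (fin Pt))%E ->
  optional F A -> graph Pt = A `&` graph Rt -> shift_indep Rt ->
  shift_indep Pt /\ (forall G, measurable G -> shift_law Pt G = shift_law Rt G).
Proof.
move=> P0 mP PP hA; rewrite setIC => /(graphI_fin_eq R0 P0) [finP eP] hI.
have finPR : stopped_field F Rt (fin Pt).
  rewrite (_ : fin Pt = [set w | (Rt w < +oo)%E /\ [set 1 : R] (\1_A (w, fine (Rt w)))]).
    exact: stopped_field_gen (optional_meas_indic hA) (measurable_set1 1).
  by rewrite finP; apply/seteqP; split => w [fw hw]; split => //; apply/(indic_eq1 R).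
have subP : fin Pt `<=` fin Rt by rewrite finP => w [].
have eY w : fin Pt w -> Delta X Pt w = Delta X Rt w by rewrite /Delta => /eP ->.
have trace E' : stopped_field F Pt E' -> E' `<=` fin Pt /\
    exists2 E, stopped_field F Rt E & E' = E `&` fin Rt `&` Delta X Rt @^-1` setT.
  move=> hE'; split; first exact: stopped_field_sub hE'.
  have [E hE ->] := stopped_field_trace subP eP hE'.
  exists (fin Pt `&` E)%classic; first exact: stopped_field_setI finPR hE.
  rewrite preimage_setT setIT; apply/seteqP.
  by split => [w [fw Ew]|w [[fw Ew] _]]; do ?split => //; exact: subP.
have [hI' law] := indep_cond_restrict C0 (Pr_neq0 (fin_measurable mP) PP)
  measurableT (stopped_field_fin (F := F) (S := Pt)) eY trace hI.
by split => // G mG; rewrite /shift_law law // setIT preimage_setT condP_setT ?divr1.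
Qed.

Lemma shift_indep_restrict_shift Pt Ga :
  (forall w, (0 <= Pt w)%E) -> measurable_fun setT Pt -> (0 < P (fin Pt))%E ->
  measurable Ga -> graph Pt = btpre X Ga `&` graph Rt -> shift_indep Rt ->
  shift_indep Pt /\
  (forall G, measurable G -> shift_law Pt G = shift_law Rt (G `&` Ga) / shift_law Rt Ga).
Proof.
move=> P0 mP PP mGa; rewrite setIC => /(fin_graphI_btpre R0 P0) [finP eP] hI.
have subP : fin Pt `<=` fin Rt by rewrite finP => w [].
have eY w : fin Pt w -> Delta X Pt w = Delta X Rt w by rewrite /Delta => /eP ->.
apply: indep_cond_restrict C0 (Pr_neq0 (fin_measurable mP) PP) mGa
  (stopped_field_fin (F := F) (S := Pt)) eY _ hI.
move=> E' hE'; split; first exact: stopped_field_sub hE'.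
have [E hE ->] := stopped_field_trace subP eP hE'.
by exists E => //; rewrite finP setIC setIA.
Qed.

Lemma shift_indep_factor S E G :
  measurable_fun setT S -> (0 < P (fin S))%E -> shift_indep S ->
  stopped_field F S E -> measurable G ->
  Pr (E `&` fin S `&` Delta X S @^-1` G) = Pr (E `&` fin S) * shift_law S G.
Proof.
move=> mS PS hI hE mG.
by apply: indep_condE (Pr_neq0 (fin_measurable mS) PS) hI hE _; exists G.
Qed.

Hypotheses (hF : filtration F) (hX : levy P F X).

Lemma measurable_shift S : measurable_fun setT S -> (forall w, (0 <= S w)%E) ->
  forall G, measurable G -> measurable (Delta X S @^-1` G).
Proof.
case: hX => adX cX _ _ _; case: hF => _ _ sF.
by apply: measurable_Delta => // t t0 B hB; exact: sF t t0 _ (adX t t0 B hB).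
Qed.

Lemma fin_split_ae S1 S2 A :
  (forall w, (0 <= S1 w)%E) -> (forall w, (0 <= S2 w)%E) ->
  eq_evan P (graph S1) (graph Rt `&` A) ->
  eq_evan P (graph S2) (graph Rt `&` (halfline `\` A)) ->
  exists N, [/\ measurable N, P N = 0%E & forall w, ~ N w ->
    [/\ fin Rt w <-> fin S1 w \/ fin S2 w, ~ (fin S1 w /\ fin S2 w),
        fin S1 w -> S1 w = Rt w & fin S2 w -> S2 w = Rt w]].
Proof.
move=> S10 S20 /eq_evanP [N1 [mN1 PN1 e1]] /eq_evanP [N2 [mN2 PN2 e2]].
exists (N1 `|` N2); split; [exact: measurableU | exact: null_set_setU |].
move=> w /not_orP [n1 n2].
have [f1 eS1] := graphI_fin (R0 w) (S10 w) (fun t => e1 w t n1).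
have [f2 eS2] := graphI_fin (R0 w) (S20 w) (fun t => e2 w t n2).
have t0 : 0 <= fine (Rt w) by exact: fine_ge0.
move: f2; rewrite /setD /halfline /=.
by case: (pselect (A (w, fine (Rt w)))); split => //; tauto.
Qed.

Lemma measurable_stopped_shift S E G :
  measurable_fun setT S -> (forall w, (0 <= S w)%E) -> stopped_field F S E -> measurable G ->
  measurable (E `&` fin S `&` Delta X S @^-1` G).
Proof.
move=> mS S0 hE mG; apply: measurableI; last exact: measurable_shift.
by apply: measurableI; [exact: (stopped_field_measurable hF mS S0) _ hE | exact: fin_measurable].
Qed.

Lemma shift_glue S1 S2 A :
  (forall w, (0 <= S1 w)%E) -> measurable_fun setT S1 -> (0 < P (fin S1))%E ->
  shift_indep S1 ->
  (forall w, (0 <= S2 w)%E) -> measurable_fun setT S2 -> (0 < P (fin S2))%E ->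
  shift_indep S2 ->
  eq_evan P (graph S1) (graph Rt `&` A) ->
  eq_evan P (graph S2) (graph Rt `&` (halfline `\` A)) ->
  forall E G, stopped_field F Rt E -> measurable G ->
  Pr (E `&` fin Rt `&` Delta X Rt @^-1` G) =
    Pr (E `&` fin S1) * shift_law S1 G + Pr (E `&` fin S2) * shift_law S2 G.
Proof.
move=> S10 mS1 PS1 hI1 S20 mS2 PS2 hI2 ev1 ev2 E G hE mG.
have [N [mN PN hN]] := fin_split_ae S10 S20 ev1 ev2.
have [E1 hE1 eE1] : exists2 E1, stopped_field F S1 E1 &
    forall w, ~ N w -> (E w /\ fin S1 w <-> E1 w).
  apply: stopped_field_trace_ae hE => w /hN [h _ + _] f1.
  by move=> /(_ f1) ->; split => //; apply/h; left.
have [E2 hE2 eE2] : exists2 E2, stopped_field F S2 E2 &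
    forall w, ~ N w -> (E w /\ fin S2 w <-> E2 w).
  apply: stopped_field_trace_ae hE => w /hN [h _ _ +] f2.
  by move=> /(_ f2) ->; split => //; apply/h; right.
rewrite (Pr_split_ae mN PN (measurable_stopped_shift mR R0 hE mG)
  (measurable_stopped_shift mS1 S10 hE1 mG) (measurable_stopped_shift mS2 S20 hE2 mG)).
- rewrite !shift_indep_factor //.
  have mE := stopped_field_measurable hF mR R0 hE.
  have trace S E' : measurable_fun setT S -> (forall w, (0 <= S w)%E) ->
      stopped_field F S E' -> (forall w, ~ N w -> (E w /\ fin S w <-> E' w)) ->
      Pr (E' `&` fin S) = Pr (E `&` fin S).
    move=> mS S0 hE' eE'; apply: (Pr_eq_ae mN PN).
    - apply: measurableI; last exact: fin_measurable.
      exact: (stopped_field_measurable hF mS S0) _ hE'.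
    - by apply: measurableI; last exact: fin_measurable.
    - by move=> w /eE'; have := stopped_field_sub hE' (t := w); rewrite /setI /=; tauto.
  by rewrite (trace _ _ mS1 S10 hE1 eE1) (trace _ _ mS2 S20 hE2 eE2).
- move=> w nN; have [fR disj e1 e2] := hN w nN.
  have d1 : fin S1 w -> (G (Delta X S1 w) <-> G (Delta X Rt w)) by rewrite /Delta => /e1 ->.
  have d2 : fin S2 w -> (G (Delta X S2 w) <-> G (Delta X Rt w)) by rewrite /Delta => /e2 ->.
  by have := eE1 w nN; have := eE2 w nN; rewrite /setI /preimage /=; tauto.
- by move=> w /hN [_ disj _ _] [[_ f1] _] [[_ f2] _]; exact: disj.
Qed.

Lemma shift_indep_glue_optional S1 S2 A :
  (forall w, (0 <= S1 w)%E) -> measurable_fun setT S1 -> (0 < P (fin S1))%E ->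
  shift_indep S1 ->
  (forall w, (0 <= S2 w)%E) -> measurable_fun setT S2 -> (0 < P (fin S2))%E ->
  shift_indep S2 ->
  eq_evan P (graph S1) (graph Rt `&` A) ->
  eq_evan P (graph S2) (graph Rt `&` (halfline `\` A)) ->
  (forall G, measurable G -> shift_law S1 G = shift_law S2 G) ->
  shift_indep Rt /\ (forall G, measurable G -> shift_law Rt G = shift_law S1 G).
Proof.
move=> S10 mS1 PS1 hI1 S20 mS2 PS2 hI2 ev1 ev2 law12.
have glue := shift_glue S10 mS1 PS1 hI1 S20 mS2 PS2 hI2 ev1 ev2.
apply: factor_indep_cond C0 (stopped_field_fin (F := F) (S := Rt)) _ => E G hE mG.
have := glue E setT hE measurableT.
rewrite preimage_setT setIT /shift_law preimage_setT !condP_setT ?mulr1 => [->||];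
  last 2 first.
- exact: Pr_neq0 (fin_measurable mS2) PS2.
- exact: Pr_neq0 (fin_measurable mS1) PS1.
by rewrite glue // -law12 // mulrDl.
Qed.

Lemma shift_indep_glue_shift S1 S2 Ga (M : probability (Dsp R d) R) :
  (forall w, (0 <= S1 w)%E) -> measurable_fun setT S1 -> (0 < P (fin S1))%E ->
  shift_indep S1 ->
  (forall w, (0 <= S2 w)%E) -> measurable_fun setT S2 -> (0 < P (fin S2))%E ->
  shift_indep S2 ->
  measurable Ga ->
  graph S1 = graph Rt `&` btpre X Ga -> graph S2 = graph Rt `&` btpre X (~` Ga) ->
  indep_cond P (fin Rt) (stopped_field F Rt)
    (sigmaR (fin Rt) (fun w => (\1_Ga (Delta X Rt w) : R))) ->
  shift_law Rt Ga = fine (M Ga) ->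
  (forall G, measurable G -> shift_law S1 G = fine (M (G `&` Ga)) / fine (M Ga)) ->
  (forall G, measurable G ->
     shift_law S2 G = fine (M (G `&` ~` Ga)) / fine (M (~` Ga))) ->
  shift_indep Rt /\ (forall G, measurable G -> shift_law Rt G = fine (M G)).
Proof.
move=> S10 mS1 PS1 hI1 S20 mS2 PS2 hI2 mGa g1 g2 hIGa lawGa law1 law2.
have glue := shift_glue S10 mS1 PS1 hI1 S20 mS2 PS2 hI2
  (eq_evan_eq P g1) (eq_evan_eq P (etrans g2 (congr1 _ (btpreC Ga)))).
have [fin1 _] := fin_graphI_btpre R0 S10 g1.
have [fin2 _] := fin_graphI_btpre R0 S20 g2.
have Pr1 E : stopped_field F Rt E -> Pr (E `&` fin S1) = Pr (E `&` fin Rt) * fine (M Ga).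
  move=> hE; rewrite -lawGa fin1 setIA; apply: indep_condE C0 hIGa hE _.
  exists [set 1]; split; first exact: measurable_set1.
  by apply/seteqP; split => w [fw hw]; split => //; apply/(indic_eq1 R).
have Pr2 E : stopped_field F Rt E ->
    Pr (E `&` fin S2) = Pr (E `&` fin Rt) * fine (M (~` Ga)).
  move=> hE; have := glue E setT hE measurableT.
  rewrite preimage_setT setIT /shift_law preimage_setT !condP_setT ?mulr1 ?Pr1 //; last 2 first.
  - exact: Pr_neq0 (fin_measurable mS2) PS2.
  - exact: Pr_neq0 (fin_measurable mS1) PS1.
  rewrite probability_setC // fineB ?fin_num_measure //= => h.
  by rewrite mulrBr mulr1 {1}h; ring.
have MGa0 : fine (M Ga) != 0.
  apply: contra_neq (Pr_neq0 (fin_measurable mS1) PS1) => M0.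
  have e : fin Rt `&` fin S1 = fin S1 by rewrite fin1 setIA setIid.
  by rewrite -e Pr1 ?M0 ?mulr0 //; exact: stopped_field_fin.
have MGac0 : fine (M (~` Ga)) != 0.
  apply: contra_neq (Pr_neq0 (fin_measurable mS2) PS2) => M0.
  have e : fin Rt `&` fin S2 = fin S2 by rewrite fin2 setIA setIid.
  by rewrite -e Pr2 ?M0 ?mulr0 //; exact: stopped_field_fin.
apply: factor_indep_cond C0 (stopped_field_fin (F := F) (S := Rt)) _ => E G hE mG.
rewrite glue // Pr1 // Pr2 // law1 // law2 //.
have -> : fine (M G) = fine (M (G `&` Ga)) + fine (M (G `&` ~` Ga)).
  have mGGa : measurable (G `&` Ga) by exact: measurableI.
  have mGGac : measurable (G `&` ~` Ga) by apply: measurableI => //; exact: measurableC.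
  rewrite -fineD ?fin_num_measure // -measureU //; first by rewrite -setIUr setUCr setIT.
  by rewrite setIACA setICr !setI0.
by field; rewrite MGa0 MGac0.
Qed.

End Regeneration.

Theorem lemma3p2 (R : realType) (d : nat) (dO : measure_display)
  (Omega : measurableType dO) (P : probability Omega R)
  (F : R -> set (set Omega)) (X : R -> Omega -> 'rV[R]_d)
  (Rt : Omega -> \bar R) :
  filtration F -> levy P F X ->
  (forall w, (0 <= Rt w)%E) -> measurable_fun setT Rt ->
  (0 < P (fin Rt))%E ->
  (* (I) *)
  ((indep_cond P (fin Rt) (stopped_field F Rt) (sigmaD (fin Rt) (Delta X Rt)) ->
    (* (I)(a) *)
    (forall (Pt : Omega -> \bar R) (A : set (Omega * R)),
       (forall w, (0 <= Pt w)%E) -> measurable_fun setT Pt ->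
       (0 < P (fin Pt))%E ->
       optional F A -> graph Pt = A `&` graph Rt ->
       indep_cond P (fin Pt) (stopped_field F Pt) (sigmaD (fin Pt) (Delta X Pt)) /\
       (forall G : set (Dsp R d), measurable G ->
          condP P (fin Pt) (Delta X Pt @^-1` G) =
          condP P (fin Rt) (Delta X Rt @^-1` G))) /\
    (* (I)(b) *)
    (forall (Pt : Omega -> \bar R) (Gamma : set (Dsp R d)),
       (forall w, (0 <= Pt w)%E) -> measurable_fun setT Pt ->
       (0 < P (fin Pt))%E ->
       measurable Gamma -> graph Pt = btpre X Gamma `&` graph Rt ->
       indep_cond P (fin Pt) (stopped_field F Pt) (sigmaD (fin Pt) (Delta X Pt)) /\
       (forall G : set (Dsp R d), measurable G ->
          condP P (fin Pt) (Delta X Pt @^-1` G) =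
          condP P (fin Rt) (Delta X Rt @^-1` (G `&` Gamma)) /
          condP P (fin Rt) (Delta X Rt @^-1` Gamma))))) /\
  (* (II) *)
  ((* (II)(i) *)
   (forall (R1 R2 : Omega -> \bar R) (A : set (Omega * R)),
      (forall w, (0 <= R1 w)%E) -> measurable_fun setT R1 -> (0 < P (fin R1))%E ->
      (forall w, (0 <= R2 w)%E) -> measurable_fun setT R2 -> (0 < P (fin R2))%E ->
      indep_cond P (fin R1) (stopped_field F R1) (sigmaD (fin R1) (Delta X R1)) ->
      indep_cond P (fin R2) (stopped_field F R2) (sigmaD (fin R2) (Delta X R2)) ->
      optional F A ->
      eq_evan P (graph R1) (graph Rt `&` A) ->
      eq_evan P (graph R2) (graph Rt `&` (halfline `\` A)) ->
      (forall G : set (Dsp R d), measurable G ->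
         condP P (fin R1) (Delta X R1 @^-1` G) =
         condP P (fin R2) (Delta X R2 @^-1` G)) ->
      indep_cond P (fin Rt) (stopped_field F Rt) (sigmaD (fin Rt) (Delta X Rt)) /\
      (forall G : set (Dsp R d), measurable G ->
         condP P (fin Rt) (Delta X Rt @^-1` G) =
         condP P (fin R1) (Delta X R1 @^-1` G))) /\
   (* (II)(ii) *)
   (forall (R1 R2 : Omega -> \bar R) (Gamma : set (Dsp R d))
           (M : probability (Dsp R d) R),
      (forall w, (0 <= R1 w)%E) -> measurable_fun setT R1 -> (0 < P (fin R1))%E ->
      (forall w, (0 <= R2 w)%E) -> measurable_fun setT R2 -> (0 < P (fin R2))%E ->
      indep_cond P (fin R1) (stopped_field F R1) (sigmaD (fin R1) (Delta X R1)) ->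
      indep_cond P (fin R2) (stopped_field F R2) (sigmaD (fin R2) (Delta X R2)) ->
      measurable Gamma ->
      graph R1 = graph Rt `&` btpre X Gamma ->
      graph R2 = graph Rt `&` btpre X (~` Gamma) ->
      indep_cond P (fin Rt) (stopped_field F Rt)
        (sigmaR (fin Rt) (fun w => (\1_Gamma (Delta X Rt w) : R))) ->
      condP P (fin Rt) (Delta X Rt @^-1` Gamma) = fine (M Gamma) ->
      (forall G : set (Dsp R d), measurable G ->
         condP P (fin R1) (Delta X R1 @^-1` G) =
         fine (M (G `&` Gamma)) / fine (M Gamma)) ->
      (forall G : set (Dsp R d), measurable G ->
         condP P (fin R2) (Delta X R2 @^-1` G) =
         fine (M (G `&` ~` Gamma)) / fine (M (~` Gamma))) ->
      indep_cond P (fin Rt) (stopped_field F Rt) (sigmaD (fin Rt) (Delta X Rt)) /\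
      (forall G : set (Dsp R d), measurable G ->
         condP P (fin Rt) (Delta X Rt @^-1` G) = fine (M G)))).
Proof.
move=> hF hX R0 mR PR; split.
  move=> hI; split => [Pt A P0 mP PP hA hg|Pt Ga P0 mP PP mGa hg].
    exact: shift_indep_restrict_optional hA hg hI.
  exact: shift_indep_restrict_shift mGa hg hI.
(* (II)(i) holds without the optionality of A: only the graphs of R_1, R_2 matter *)
split => [R1 R2 A R10 mR1 PR1 R20 mR2 PR2 hI1 hI2 _ ev1 ev2 law12|].
  exact: (shift_indep_glue_optional R0 mR PR hF hX R10 mR1 PR1 hI1 R20 mR2 PR2 hI2
    ev1 ev2 law12).
move=> R1 R2 Ga M R10 mR1 PR1 R20 mR2 PR2 hI1 hI2 mGa g1 g2 hIGa lawGa law1 law2.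
exact: (shift_indep_glue_shift R0 mR PR hF hX R10 mR1 PR1 hI1 R20 mR2 PR2 hI2 mGa g1 g2
  hIGa lawGa law1 law2).
Qed.
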